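(* Let $K$ be a field, $X$ a finite connected poset, $\varphi$ a Lie automorphism of $I(X,K)$, and $e_{xy}\in L_i$ with $i>0$. Let $u<v$ and $k\in K^*$ be such that $\widetilde\varphi(e_{xy})=k\,e_{uv}$. Then $\varphi(e_{xy})-\widetilde\varphi(e_{xy})\in\langle e_{uv}\rangle\cap J_{i+1}$.
   Context: $I(X,K)$ is the incidence algebra: functions $f:X\times X\to K$ with $f(x,y)=0$ unless $x\le y$, product $(fg)(x,y)=\sum_{x\le t\le y}f(x,t)g(t,y)$; $e_{xy}$ ($x\le y$) is the basis element equal to $1$ at $(x,y)$ and $0$ elsewhere; $\langle e_{uv}\rangle$ is the two-sided ideal generated by $e_{uv}$. A Lie automorphism is a bijective linear map preserving $[f,g]=fg-gf$. Let $l(\lfloor x,y\rfloor)$ be the maximum length of a chain in $\{z:x\le z\le y\}$; $L_i=\mathrm{span}_K\{e_{xy}: l(\lfloor x,y\rfloor)=i\}$ and $J_i=\mathrm{span}_K\{e_{xy}: l(\lfloor x,y\rfloor)\ge i\}$ ($i\ge0$). $\widetilde\varphi$ is the linear map sending $e_{xy}\in L_i$ to the $L_i$-component of $\varphi(e_{xy})$ in $I(X,K)=\bigoplus_iL_i$; for $i>0$ it is known that $\widetilde\varphi(e_{xy})$ is a nonzero multiple of some $e_{uv}$ with $u<v$. Connected means any two elements are joined by a sequence in which consecutive elements are in a covering relation. *)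

From HB Require Import structures.
From mathcomp Require Import all_boot all_order all_algebra.
Set Implicit Arguments. Unset Strict Implicit. Unset Printing Implicit Defensive.
Import Order.TTheory GRing.Theory.
Local Open Scope ring_scope.

(* Ambient space: all functions X x X -> K; I(X,K) is the subspace [incid]. *)
Notation IA X K := {ffun (X * X)%type -> K}.

Section Incidence.
Variables (d : Order.disp_t) (X : finPOrderType d) (K : fieldType).

Definition incid (f : IA X K) : Prop :=
  forall x y : X, ~~ (x <= y)%O -> f (x, y) = 0.

Definition imul (f g : IA X K) : IA X K :=
  [ffun p : X * X => \sum_(t : X | ((p.1 <= t)%O && (t <= p.2)%O)) f (p.1, t) * g (t, p.2)].

Definition ibracket (f g : IA X K) : IA X K := imul f g - imul g f.

Definition eb (u v : X) : IA X K :=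
  [ffun p : X * X => if (p.1 == u) && (p.2 == v) then 1 else 0].

Definition iscale (a : K) (f : IA X K) : IA X K := [ffun p => a * f p].

Definition lie_aut (phi : IA X K -> IA X K) : Prop :=
  [/\ forall f, incid f -> incid (phi f),
      forall (a : K) f g, incid f -> incid g -> phi (iscale a f + g) = iscale a (phi f) + phi g,
      forall f g, incid f -> incid g -> phi f = phi g -> f = g,
      forall g, incid g -> exists2 f, incid f & phi f = g
    & forall f g, incid f -> incid g -> phi (ibracket f g) = ibracket (phi f) (phi g)].

(* maximal length of a chain in [x,y]; a chain with n+1 elements has length n *)
Definition chain_in (x y : X) (s : seq X) : bool :=
  sorted (fun a b => (a < b)%O) s && all (fun z => (x <= z)%O && (z <= y)%O) s.

Definition ilen (x y : X) : nat :=
  \max_(n < #|X|.+1 | [exists s : n.+1.-tuple X, chain_in x y s]) n.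

Definition Lcomp (i : nat) (f : IA X K) : IA X K :=
  [ffun p : X * X => if ((p.1 <= p.2)%O && (ilen p.1 p.2 == i)) then f p else 0].

Definition inJ (i : nat) (f : IA X K) : Prop :=
  incid f /\ forall x y : X, (x <= y)%O -> (ilen x y < i)%N -> f (x, y) = 0.

(* two-sided ideal of I(X,K) generated by e_uv (I(X,K) is unital) *)
Definition in_ideal_gen (u v : X) (h : IA X K) : Prop :=
  exists n (fs gs : 'I_n -> IA X K),
    (forall j, incid (fs j) /\ incid (gs j)) /\
    h = \sum_(j < n) imul (imul (fs j) (eb u v)) (gs j).

Definition covers (x y : X) : bool :=
  (x < y)%O && [forall z : X, ~~ ((x < z)%O && (z < y)%O)].

Definition connected_poset : Prop :=
  forall x y : X, exists s : seq X,
    path (fun a b => covers a b || covers b a) x s /\ last x s = y.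

End Incidence.

From HB Require Import structures.
From mathcomp Require Import all_boot all_order all_algebra.
Import Order.TTheory GRing.Theory.
Local Open Scope ring_scope.

Set Implicit Arguments. Unset Strict Implicit. Unset Printing Implicit Defensive.

(* Put g = phi(e_xy).  Every e_ab with a < b is a bracket [e_at, e_tb], and
   [J_1, J_j] is contained in J_(j+1); hence phi preserves each J_j, g lies in
   J_i, and g minus its L_i-component lies in J_(i+1).  For the ideal it is
   enough that every nonzero entry g(a,b) has a <= u and v <= b.  Applying phi
   to [e_zz, e_xy] = (delta_zx - delta_zy) e_xy shows that g is an eigenvector
   of ad phi(e_zz); at a minimal nonzero entry (a,b) of g (one with g vanishing
   strictly inside [a,b]) this forces phi(e_zz)(a,a) - phi(e_zz)(b,b) =
   delta_zx - delta_zy for all z.  Since the diagonals of the phi(e_zz) span all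
   diagonal functions, these numbers determine the pair a < b, so (u,v) is the
   only minimal nonzero entry, and induction on the length of [a,b] gives the
   bound for every nonzero entry. *)

Section ChainLength.
Variables (d : Order.disp_t) (X : finPOrderType d).
Implicit Types a b t x y : X.

Lemma chain_size_le_ilen x y (s : seq X) : chain_in x y s -> ((size s).-1 <= ilen x y)%N.
Proof.
case: s => [//|a s] hs.
have s_uniq : uniq (a :: s) by apply: lt_sorted_uniq; case/andP: hs.
have s_small : (size s < #|X|.+1)%N.
  by have := max_card (mem (a :: s)); rewrite (card_uniqP s_uniq) ltnS; exact: ltnW.
apply: (@leq_bigmax_cond _ _ _ (Ordinal s_small)).
by apply/existsP; exists (in_tuple (a :: s)).
Qed.

Lemma chain_of_ilen x y : (x <= y)%O ->
  exists2 s : seq X, chain_in x y s & (ilen x y < size s)%N.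
Proof.
move=> xy; have chain0 : [exists s : 1.-tuple X, chain_in x y s].
  by apply/existsP; exists [tuple x]; rewrite /chain_in /= lexx xy.
rewrite /ilen (bigop.bigmax_eq_arg ord0 chain0).
by case: arg_maxnP => // n /existsP[s hs] _; exists s; rewrite // size_tuple.
Qed.

Lemma ilenxx a : ilen a a = 0%N.
Proof.
have [[|p [|q s]] //] := chain_of_ilen (lexx a); first by case: (ilen a a).
move=> /andP[/= /andP[pq _] /and3P[/andP[ap pa] /andP[aq qa] _]] _.
by move: pq; rewrite (@le_anti _ _ p q) ?ltxx // (le_trans pa aq) (le_trans qa ap).
Qed.

Lemma ilen_gt0 a b : (a < b)%O -> (0 < ilen a b)%N.
Proof.
move=> ab; apply: (chain_size_le_ilen (s := [:: a; b])).
by rewrite /chain_in /= ab lexx (ltW ab) lexx.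
Qed.

Lemma eq_of_ilen_lt1 a b : (a <= b)%O -> (ilen a b < 1)%N -> a = b.
Proof. by rewrite le_eqVlt => /predU1P[//|/ilen_gt0]; case: (ilen a b). Qed.

Lemma ilen_ltl a t b : (a < t)%O -> (t <= b)%O -> (ilen t b < ilen a b)%N.
Proof.
move=> lt_at tb; have [[//|c s] /andP[sorted_s /allP in_tb] size_s] := chain_of_ilen tb.
apply: leq_trans size_s (chain_size_le_ilen (s := a :: c :: s) _).
have /andP[tc _] := in_tb c (mem_head _ _).
apply/andP; split; first by rewrite /= (lt_le_trans lt_at tc).
apply/allP => z; rewrite inE => /predU1P[->|/in_tb /andP[tz ->]].
  by rewrite lexx (ltW (lt_le_trans lt_at tb)).
by rewrite (le_trans (ltW lt_at) tz).
Qed.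

Lemma ilen_ltr a t b : (a <= t)%O -> (t < b)%O -> (ilen a t < ilen a b)%N.
Proof.
move=> le_at lt_tb; have [[//|c s] /andP[sorted_s /allP in_at] size_s] := chain_of_ilen le_at.
suff /chain_size_le_ilen : chain_in a b (rcons (c :: s) b).
  by rewrite size_rcons; exact: leq_trans size_s.
apply/andP; split.
  have /andP[_ last_t] := in_at _ (mem_last c s).
  by rewrite /= rcons_path (sorted_s : path _ c s) (le_lt_trans last_t lt_tb).
apply/allP => z; rewrite mem_rcons inE => /predU1P[->|/in_at /andP[-> zt]].
  by rewrite (ltW (le_lt_trans le_at lt_tb)) lexx.
exact: ltW (le_lt_trans zt lt_tb).
Qed.

Lemma ilen_split a b j : (a <= b)%O -> (j < ilen a b)%N ->
  exists2 t, (a < t <= b)%O & (j <= ilen t b)%N.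
Proof.
move=> ab j_lt; have [s chain_s /(leq_ltn_trans j_lt)] := chain_of_ilen ab.
case: s chain_s => [|p [|q s]] //.
move=> /andP[/= /andP[pq sorted_qs] /and3P[/andP[ap _] /andP[_ qb] in_ab]].
rewrite /= !ltnS => size_s; exists q; first by rewrite (le_lt_trans ap pq) qb.
apply: leq_trans size_s (chain_size_le_ilen (s := q :: s) _).
apply/andP; split => //; rewrite /= lexx qb /=; apply/allP => z zs.
have /andP[_ ->] := allP in_ab z zs.
by rewrite andbT (ltW (allP (order_path_min lt_trans sorted_qs) z zs)).
Qed.

End ChainLength.

Section IncidenceAlgebra.
Variables (d : Order.disp_t) (X : finPOrderType d) (K : fieldType).
Notation I := (IA X K).
Implicit Types (f g : I) (a b t z : X) (c : K).

Lemma eb_incid a b : (a <= b)%O -> incid (eb K a b).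
Proof. by move=> ab p q; rewrite ffunE /=; do 2![case: eqP => [->|] //=]; rewrite ab. Qed.

Lemma incid0 : incid (0 : I).
Proof. by move=> p q _; rewrite ffunE. Qed.

Lemma incidD f g : incid f -> incid g -> incid (f + g).
Proof. by move=> hf hg p q pq; rewrite ffunE hf // hg // addr0. Qed.

Lemma incidB f g : incid f -> incid g -> incid (f - g).
Proof. by move=> hf hg p q pq; rewrite !ffunE hf // hg // subr0. Qed.

Lemma incidZ c f : incid f -> incid (iscale c f).
Proof. by move=> hf p q pq; rewrite ffunE hf // mulr0. Qed.

Lemma incid_sum (J : finType) (P : pred J) (F : J -> I) :
  (forall j, P j -> incid (F j)) -> incid (\sum_(j | P j) F j).
Proof. by move=> hF; apply: big_ind => //; [exact: incid0 | exact: incidD]. Qed.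

Lemma imul_incid f g : incid (imul f g).
Proof.
move=> p q pq; rewrite ffunE /=; apply: big1 => t /andP[pt tq].
by rewrite (le_trans pt tq) in pq.
Qed.

Lemma ibracket_incid f g : incid (ibracket f g).
Proof. by apply: incidB; apply: imul_incid. Qed.

Lemma iscale1 f : iscale 1 f = f.
Proof. by apply/ffunP => p; rewrite ffunE mul1r. Qed.

Lemma iscale0 f : iscale 0 f = 0.
Proof. by apply/ffunP => p; rewrite !ffunE mul0r. Qed.

Lemma imul0l f : imul 0 f = 0.
Proof. by apply/ffunP => p; rewrite !ffunE big1 // => t _; rewrite ffunE mul0r. Qed.

Lemma ibracketE f g p : ibracket f g p = imul f g p - imul g f p.
Proof. by rewrite ffunE !ffunE. Qed.

Lemma iscale_ebE c a b p : iscale c (eb K a b) p = if (p.1 == a) && (p.2 == b) then c else 0.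
Proof. by rewrite !ffunE; case: ifP; rewrite ?mulr1 ?mulr0. Qed.

Lemma eb_imulE a b f p q : (a <= b)%O -> incid f ->
  imul (eb K a b) f (p, q) = if p == a then f (b, q) else 0.
Proof.
move=> ab hf; rewrite ffunE /=; have [->|pa] := eqVneq p a; last first.
  by rewrite big1 // => t _; rewrite ffunE /= (negbTE pa) mul0r.
have [bq|bq] := boolP (b <= q)%O.
  rewrite (bigD1 b) ?ab //= ffunE /= !eqxx mul1r big1 ?addr0 // => t /andP[_ tb].
  by rewrite ffunE /= (negbTE tb) andbF mul0r.
rewrite hf // big1 // => t /andP[_ tq]; rewrite ffunE /= eqxx /=.
by case: eqP => [tb|]; [rewrite -tb tq in bq | rewrite mul0r].
Qed.

Lemma imul_ebE a b f p q : (a <= b)%O -> incid f ->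
  imul f (eb K a b) (p, q) = if q == b then f (p, a) else 0.
Proof.
move=> ab hf; rewrite ffunE /=; have [->|qb] := eqVneq q b; last first.
  by rewrite big1 // => t _; rewrite ffunE /= (negbTE qb) andbF mulr0.
have [pa|pa] := boolP (p <= a)%O.
  rewrite (bigD1 a) ?pa //= ffunE /= !eqxx mulr1 big1 ?addr0 // => t /andP[_ ta].
  by rewrite ffunE /= (negbTE ta) mulr0.
rewrite hf // big1 // => t /andP[pt _]; rewrite ffunE /= eqxx andbT.
by case: eqP => [ta|]; [rewrite -ta pt in pa | rewrite mulr0].
Qed.

Lemma ibracket_eb a t b : (a <= t)%O -> (t <= b)%O -> a != b ->
  ibracket (eb K a t) (eb K t b) = eb K a b.
Proof.
move=> le_at tb ab; apply/ffunP => -[p q].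
rewrite ibracketE (eb_imulE _ _ le_at (eb_incid tb)) (eb_imulE _ _ tb (eb_incid le_at)).
rewrite !ffunE /= eqxx (eq_sym b a) (negbTE ab).
by case: (p == a); rewrite /= ?if_same subr0.
Qed.

Lemma ibracket_ebxx z a b : (a <= b)%O -> a != b ->
  ibracket (eb K z z) (eb K a b) = iscale ((z == a)%:R - (z == b)%:R) (eb K a b).
Proof.
move=> ab a_b; apply/ffunP => -[p q].
rewrite ibracketE (eb_imulE _ _ (lexx z) (eb_incid ab)) (eb_imulE _ _ ab (eb_incid (lexx z))).
rewrite iscale_ebE !ffunE /=.
have [->|za] := eqVneq z a.
  rewrite (eq_sym b a) (negbTE a_b) if_same subr0.
  by case: (p == a); case: (q == b); rewrite /= ?subr0.
rewrite if_same sub0r; have [<-|zb] := eqVneq z b.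
  by case: (p == a); case: (q == z); rewrite /= ?oppr0 ?sub0r.
by rewrite /= if_same oppr0 addr0 if_same.
Qed.

Lemma imul_iscale_eb c a b e : (a <= b)%O -> (b <= e)%O ->
  imul (iscale c (eb K a b)) (eb K b e) = iscale c (eb K a e).
Proof.
move=> ab be; apply/ffunP => -[p q].
rewrite (imul_ebE _ _ be (incidZ c (eb_incid ab))) !iscale_ebE /= eqxx andbT.
by case: (q == e); rewrite ?andbT ?andbF.
Qed.

Lemma eb_expansion f (P : pred (X * X)) : (forall p, ~~ P p -> f p = 0) ->
  f = \sum_(p | P p) iscale (f p) (eb K p.1 p.2).
Proof.
move=> f_out; apply/ffunP => q; rewrite sum_ffunE.
have other p : p != q -> iscale (f p) (eb K p.1 p.2) q = 0.
  move=> pq; rewrite iscale_ebE; case: ifP => // /andP[/eqP q1 /eqP q2].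
  by rewrite [q]surjective_pairing q1 q2 -surjective_pairing eqxx in pq.
have [Pq|nPq] := boolP (P q); last first.
  by rewrite f_out // big1 // => p Pp; rewrite other //; apply: contraNneq nPq => <-.
by rewrite (bigD1 q) //= iscale_ebE !eqxx big1 ?addr0 // => p /andP[_]; exact: other.
Qed.

Lemma in_ideal_gen_of_support (u v : X) (h : I) : (u <= v)%O ->
  (forall p, h p != 0 -> (p.1 <= u)%O && (v <= p.2)%O) -> in_ideal_gen u v h.
Proof.
move=> uv supp.
pose fs p : I := if (p.1 <= u)%O && (v <= p.2)%O then iscale (h p) (eb K p.1 u) else 0.
pose gs p : I := if (p.1 <= u)%O && (v <= p.2)%O then eb K v p.2 else 0.
exists #|{: X * X}|, (fs \o enum_val), (gs \o enum_val); split.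
  move=> j; rewrite /fs /gs /=; case: ifP => [/andP[pu vp]|_]; last by split; exact: incid0.
  by split; [apply: incidZ |]; apply: eb_incid.
rewrite -(big_enum_val (fun p => imul (imul (fs p) (eb K u v)) (gs p))) /=.
rewrite {1}(@eb_expansion h xpredT) //; apply: eq_bigr => p _.
rewrite /fs /gs; case: ifP => [/andP[pu vp]|p_out].
  by rewrite !imul_iscale_eb // (le_trans pu uv).
have -> : h p = 0 by apply/eqP; apply: contraFT p_out => /supp.
by rewrite iscale0 !imul0l.
Qed.

Lemma inJ0 j : inJ j (0 : I).
Proof. by split=> [|p q _ _]; [exact: incid0 | rewrite ffunE]. Qed.

Lemma inJD j f g : inJ j f -> inJ j g -> inJ j (f + g).
Proof.
move=> [f_inc fJ] [g_inc gJ]; split=> [|p q pq len_pq]; first exact: incidD.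
by rewrite ffunE fJ // gJ // addr0.
Qed.

Lemma inJZ j c f : inJ j f -> inJ j (iscale c f).
Proof.
move=> [f_inc fJ]; split=> [|p q pq len_pq]; first exact: incidZ.
by rewrite ffunE fJ // mulr0.
Qed.

Lemma inJ_sum j (J : finType) (P : pred J) (F : J -> I) :
  (forall i, P i -> inJ j (F i)) -> inJ j (\sum_(i | P i) F i).
Proof. by move=> hF; apply: big_ind => //; [exact: inJ0 | exact: inJD]. Qed.

Lemma inJ_le i j f : (j <= i)%N -> inJ i f -> inJ j f.
Proof. by move=> ji [f_inc fJ]; split=> // p q pq len_pq; rewrite fJ // (leq_trans len_pq). Qed.

Lemma eb_inJ j a b : (a <= b)%O -> (j <= ilen a b)%N -> inJ j (eb K a b).
Proof.
move=> ab j_le; split=> [|p q _]; first exact: eb_incid.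
rewrite ffunE /=; case: andP => // -[/eqP -> /eqP ->].
by rewrite ltnNge j_le.
Qed.

Lemma inJ1_lt f a b : inJ 1 f -> f (a, b) != 0 -> (a < b)%O.
Proof.
move=> [f_inc fJ] fab; have ab : (a <= b)%O by apply: contraNT fab => /f_inc ->.
rewrite lt_neqAle ab andbT; apply: contraNneq fab => eq_ab.
by rewrite -eq_ab fJ // ilenxx.
Qed.

Lemma ibracket_inJ1 f g : inJ 1 (ibracket f g).
Proof.
split=> [|p q pq /(eq_of_ilen_lt1 pq) <-]; first exact: ibracket_incid.
have only_p (h h' : I) : \sum_(t | (p <= t <= p)%O) h (p, t) * h' (t, p) = h (p, p) * h' (p, p).
  rewrite (bigD1 p) ?lexx //= big1 ?addr0 // => t /andP[pt tp].
  by rewrite -(le_anti pt) eqxx in tp.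
by rewrite ibracketE !ffunE /= !only_p mulrC subrr.
Qed.

Lemma ibracket_inJ j f g : inJ 1 f -> inJ j g -> inJ j.+1 (ibracket f g).
Proof.
move=> f1 [g_inc gJ]; split=> [|p q pq]; first exact: ibracket_incid.
rewrite ltnS ibracketE !ffunE /= => len_pq.
rewrite !big1 ?subrr // => t /andP[pt tq].
  have [->|ftq] := eqVneq (f (t, q)) 0; first by rewrite mulr0.
  by rewrite gJ ?mul0r // (leq_trans (ilen_ltr pt (inJ1_lt f1 ftq))).
have [->|fpt] := eqVneq (f (p, t)) 0; first by rewrite mul0r.
by rewrite gJ ?mulr0 // (leq_trans (ilen_ltl (inJ1_lt f1 fpt) tq)).
Qed.

Lemma inJ_sub_Lcomp i f : inJ i f -> inJ i.+1 (f - Lcomp i f).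
Proof.
move=> [f_inc fJ]; split=> [|p q pq].
  by apply: incidB => // a b ab; rewrite ffunE /= (negbTE ab).
rewrite ltnS leq_eqVlt !ffunE /= pq => /predU1P[->|len_pq]; first by rewrite eqxx subrr.
by rewrite (ltn_eqF len_pq) fJ // subr0.
Qed.

Definition minimal_entry (g : I) a b : Prop :=
  [/\ g (a, b) != 0,
      forall t, (a < t)%O -> (t <= b)%O -> g (t, b) = 0
    & forall t, (a <= t)%O -> (t < b)%O -> g (a, t) = 0].

Lemma minimal_entry_of_inJ i f a b : inJ i f -> ilen a b = i -> f (a, b) != 0 ->
  minimal_entry f a b.
Proof.
move=> [_ fJ] len_ab fab; split=> // t.
  by move=> lt_at tb; rewrite fJ // -len_ab ilen_ltl.
by move=> le_at lt_tb; rewrite fJ // -len_ab ilen_ltr.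
Qed.

Lemma minimal_entry_eigen (H G : I) c a b : (a <= b)%O -> minimal_entry G a b ->
  ibracket H G = iscale c G -> H (a, a) - H (b, b) = c.
Proof.
move=> ab [Gab G_right G_left] /(congr1 (fun F : I => F (a, b))).
rewrite /= ibracketE !ffunE /=.
have -> : \sum_(t | (a <= t <= b)%O) H (a, t) * G (t, b) = H (a, a) * G (a, b).
  rewrite (bigD1 a) ?lexx ?ab //= big1 ?addr0 // => t /andP[/andP[le_at tb] ta].
  by rewrite G_right ?mulr0 // lt_neqAle eq_sym ta.
have -> : \sum_(t | (a <= t <= b)%O) G (a, t) * H (t, b) = G (a, b) * H (b, b).
  rewrite (bigD1 b) ?lexx ?ab //= big1 ?addr0 // => t /andP[/andP[le_at tb] bt].
  by rewrite G_left ?mul0r // lt_neqAle bt.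
by rewrite [G _ * _]mulrC -mulrBl => /(mulIf Gab).
Qed.

Lemma support_above_minimal g (u v : X) :
  (forall a b, minimal_entry g a b -> a = u /\ b = v) ->
  forall a b, g (a, b) != 0 -> (a <= u)%O && (v <= b)%O.
Proof.
move=> min_uv a b; have [n] := ubnP (ilen a b); elim: n a b => // n IH a b.
rewrite ltnS => len_ab gab.
have [/existsP[t /and3P[lt_at tb gtb]]|no_right] :=
  boolP [exists t, [&& (a < t)%O, (t <= b)%O & g (t, b) != 0]].
  have /andP[tu ->] := IH t b (leq_trans (ilen_ltl lt_at tb) len_ab) gtb.
  by rewrite (le_trans (ltW lt_at) tu).
have [/existsP[t /and3P[le_at lt_tb gat]]|no_left] :=
  boolP [exists t, [&& (a <= t)%O, (t < b)%O & g (a, t) != 0]].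
  have /andP[-> vt] := IH a t (leq_trans (ilen_ltr le_at lt_tb) len_ab) gat.
  by rewrite (le_trans vt (ltW lt_tb)).
have [-> ->] : a = u /\ b = v; last by rewrite !lexx.
apply: min_uv; split=> // t h1 h2; apply/eqP.
  by apply: contraNT no_right => gt; apply/existsP; exists t; rewrite h1 h2 gt.
by apply: contraNT no_left => gt; apply/existsP; exists t; rewrite h1 h2 gt.
Qed.

Lemma sub_indicator_inj a b a' b' : (a < b)%O -> (a' < b')%O ->
  (forall w, ((a == w)%:R - (b == w)%:R : K) = (a' == w)%:R - (b' == w)%:R) ->
  a = a' /\ b = b'.
Proof.
move=> ab ab' eq_ind; have := eq_ind a; have := eq_ind b.
rewrite !eqxx (lt_eqF ab) (gt_eqF ab).
have [->|a'a] := eqVneq a' a.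
  rewrite (lt_eqF ab); case: (eqVneq b' b) => [-> //|_ /eqP].
  by rewrite /= subrr sub0r oppr_eq0 oner_eq0.
have [b'a|_] := eqVneq b' a; last by move=> _ /eqP; rewrite /= subr0 subrr oner_eq0.
rewrite b'a (lt_eqF ab); case: (eqVneq a' b) => [a'b|_ /eqP]; last first.
  by rewrite /= subrr sub0r oppr_eq0 oner_eq0.
by move: ab'; rewrite a'b b'a => /(lt_trans ab); rewrite ltxx.
Qed.

End IncidenceAlgebra.

Section LieAutomorphism.
Variables (d : Order.disp_t) (X : finPOrderType d) (K : fieldType).
Notation I := (IA X K).
Variable phi : I -> I.
Hypothesis phi_lie : lie_aut phi.
Implicit Types (f g : I) (a b z : X) (c : K).

Lemma lie_aut_incid f : incid f -> incid (phi f).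
Proof. by case: phi_lie => phi_incid *; exact: phi_incid. Qed.

Lemma lie_aut_lin c f g : incid f -> incid g ->
  phi (iscale c f + g) = iscale c (phi f) + phi g.
Proof. by case: phi_lie => _ phi_lin *; exact: phi_lin. Qed.

Lemma lie_aut_surj g : incid g -> exists2 f, incid f & phi f = g.
Proof. by case: phi_lie => _ _ _ phi_surj _; exact: phi_surj. Qed.

Lemma lie_aut_bracket f g : incid f -> incid g ->
  phi (ibracket f g) = ibracket (phi f) (phi g).
Proof. by case: phi_lie => _ _ _ _ phi_br; exact: phi_br. Qed.

Lemma lie_aut0 : phi 0 = 0.
Proof.
have := lie_aut_lin 1 (@incid0 _ X K) (@incid0 _ X K).
by rewrite !iscale1 addr0 => phi00; apply: (addrI (phi 0)); rewrite addr0 -phi00.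
Qed.

Lemma lie_autD f g : incid f -> incid g -> phi (f + g) = phi f + phi g.
Proof. by move=> f_inc g_inc; rewrite -{1}(iscale1 f) lie_aut_lin // iscale1. Qed.

Lemma lie_autZ c f : incid f -> phi (iscale c f) = iscale c (phi f).
Proof.
by move=> f_inc; rewrite -[iscale c f]addr0 lie_aut_lin ?lie_aut0 ?addr0 //; exact: incid0.
Qed.

Lemma lie_aut_sum (J : finType) (P : pred J) (F : J -> I) :
  (forall j, P j -> incid (F j)) -> phi (\sum_(j | P j) F j) = \sum_(j | P j) phi (F j).
Proof.
move=> F_inc; apply: (@proj2 (incid (\sum_(j | P j) F j))).
apply: (big_ind2 (fun s t => incid s /\ phi s = t)) => [|s1 t1 s2 t2 [s1_inc <-] [s2_inc <-]|j Pj].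
- by split; [exact: incid0 | exact: lie_aut0].
- by split; [exact: incidD | exact: lie_autD].
- by split; [exact: F_inc|].
Qed.

Lemma lie_aut_inJ_of_eb j :
  (forall a b, (a <= b)%O -> (j < ilen a b)%N -> inJ j.+1 (phi (eb K a b))) ->
  forall f, inJ j.+1 f -> inJ j.+1 (phi f).
Proof.
move=> ebJ f [f_inc fJ].
have f_out p : ~~ ((p.1 <= p.2)%O && (j < ilen p.1 p.2)%N) -> f p = 0.
  case: p => a b /=; case: (boolP (a <= b)%O) => [ab|/f_inc //].
  by rewrite -leqNgt -ltnS => /fJ ->.
rewrite (eb_expansion f_out) lie_aut_sum => [|p /andP[p12 _]]; last exact/incidZ/eb_incid.
apply: inJ_sum => p /andP[p12 len_p].
by rewrite lie_autZ; [apply/inJZ/ebJ | exact: eb_incid].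
Qed.

Lemma lie_aut_inJ1 f : inJ 1 f -> inJ 1 (phi f).
Proof.
apply: lie_aut_inJ_of_eb => a b ab len_ab.
have a_b : a != b by apply: contraTneq len_ab => ->; rewrite ilenxx.
rewrite -(ibracket_eb K (lexx a) ab a_b).
rewrite (lie_aut_bracket (eb_incid K (lexx a)) (eb_incid K ab)).
exact: ibracket_inJ1.
Qed.

Lemma lie_aut_inJ j f : inJ j f -> inJ j (phi f).
Proof.
elim: j f => [|[|j] IH] f; first by case=> f_inc _; split=> //; exact: lie_aut_incid.
  exact: lie_aut_inJ1.
apply: lie_aut_inJ_of_eb => a b ab /(ilen_split ab)[t /andP[lt_at tb] len_tb].
have a_b : a != b by apply: contraTneq lt_at => ->; rewrite (le_gtF tb).
rewrite -(ibracket_eb K (ltW lt_at) tb a_b).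
rewrite (lie_aut_bracket (eb_incid K (ltW lt_at)) (eb_incid K tb)).
apply: ibracket_inJ; first by apply/lie_aut_inJ1/eb_inJ; rewrite ?ltW ?ilen_gt0.
by apply/IH/eb_inJ.
Qed.

Lemma lie_aut_diag_span (w : X) : exists c : X -> K,
  forall t : X, (t == w)%:R = \sum_z c z * phi (eb K z z) (t, t).
Proof.
have [f f_inc phi_f] := lie_aut_surj (eb_incid K (lexx w)).
pose fd := \sum_z iscale (f (z, z)) (eb K z z).
have fd_inc : incid fd by apply: incid_sum => z _; apply/incidZ/eb_incid.
have f_fd : inJ 1 (f - fd).
  split=> [|a b ab /(eq_of_ilen_lt1 ab) <-]; first exact: incidB.
  rewrite !ffunE sum_ffunE (bigD1 a) //= iscale_ebE /= !eqxx big1 ?addr0 ?subrr // => z za.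
  by rewrite iscale_ebE /= eq_sym (negbTE za).
have phi_f_split : phi f = phi (f - fd) + phi fd by rewrite -lie_autD ?subrK //; exact: incidB.
exists (fun z => f (z, z)) => t; have [_ diag0] := lie_aut_inJ1 f_fd.
have -> : (t == w)%:R = eb K w w (t, t) by rewrite ffunE /= andbb; case: (t == w).
rewrite -phi_f phi_f_split ffunE diag0 ?ilenxx // add0r.
rewrite lie_aut_sum => [|z _]; last exact/incidZ/eb_incid.
by rewrite sum_ffunE; apply: eq_bigr => z _; rewrite lie_autZ ?ffunE //; exact: eb_incid.
Qed.

Section BasisImage.
Variables x y : X.
Hypothesis lt_xy : (x < y)%O.
Let g := phi (eb K x y).

Lemma lie_aut_eb_eigen z :
  ibracket (phi (eb K z z)) g = iscale ((z == x)%:R - (z == y)%:R) g.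
Proof.
have xy_inc := eb_incid K (ltW lt_xy).
rewrite -(lie_aut_bracket (eb_incid K (lexx z)) xy_inc).
by rewrite (ibracket_ebxx K z (ltW lt_xy) (negbT (lt_eqF lt_xy))) lie_autZ.
Qed.

Lemma lie_aut_eb_minimal_entry_uniq a b a' b' : (a < b)%O -> (a' < b')%O ->
  minimal_entry g a b -> minimal_entry g a' b' -> a = a' /\ b = b'.
Proof.
move=> ab ab' min_ab min_ab'; apply: (sub_indicator_inj (K := K) ab ab') => w.
have [c span] := lie_aut_diag_span w.
rewrite !span -!sumrB; apply: eq_bigr => z _; rewrite -!mulrBr.
by rewrite (minimal_entry_eigen (ltW ab) min_ab (lie_aut_eb_eigen z))
  (minimal_entry_eigen (ltW ab') min_ab' (lie_aut_eb_eigen z)).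
Qed.

End BasisImage.

End LieAutomorphism.

Theorem lemma4p4 (d : Order.disp_t) (X : finPOrderType d) (K : fieldType)
  (phi : IA X K -> IA X K) (x y u v : X) (i : nat) (k : K) :
  connected_poset X ->
  lie_aut phi ->
  (x <= y)%O -> ilen x y = i -> (0 < i)%N ->
  (u < v)%O -> k != 0 ->
  Lcomp i (phi (eb K x y)) = iscale k (eb K u v) ->
  in_ideal_gen u v (phi (eb K x y) - Lcomp i (phi (eb K x y))) /\
  inJ i.+1 (phi (eb K x y) - Lcomp i (phi (eb K x y))).
Proof.
move=> _ phi_lie xy len_xy i_gt0 uv k0 L_g.
set g := phi (eb K x y).
have lt_xy : (x < y)%O.
  by rewrite lt_neqAle xy andbT; apply: contraTneq i_gt0 => eq_xy; rewrite -len_xy eq_xy ilenxx.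
have gJ : inJ i g by apply: (lie_aut_inJ phi_lie); apply: eb_inJ; rewrite ?len_xy.
split; last exact: inJ_sub_Lcomp.
have [len_uv g_uv] : ilen u v = i /\ g (u, v) = k.
  move/(congr1 (fun h : IA X K => h (u, v))): L_g; rewrite !ffunE /= (ltW uv) !eqxx mulr1.
  by case: eqP => [-> //|_ k_eq0]; rewrite -k_eq0 eqxx in k0.
have min_uv : minimal_entry g u v by apply: minimal_entry_of_inJ gJ len_uv _; rewrite g_uv.
have only_uv a b : minimal_entry g a b -> a = u /\ b = v.
  move=> min_ab; have [gab _ _] := min_ab.
  have ab := inJ1_lt (inJ_le i_gt0 gJ) gab.
  exact: (lie_aut_eb_minimal_entry_uniq phi_lie lt_xy ab uv min_ab min_uv).
rewrite L_g; apply: in_ideal_gen_of_support (ltW uv) _ => -[a b] /=.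
rewrite !ffunE /=; case: andP => [[/eqP -> /eqP ->] _|_]; first by rewrite !lexx.
by rewrite mulr0 subr0; exact: support_above_minimal only_uv a b.
Qed.
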